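(* Let $(L,\mathbf N)$ be an architecture with $L\ge2$, input dimension $d_{\mathrm{in}}=N_0$, output dimension $d_{\mathrm{out}}=N_L$, width $W=\max_\ell N_\ell$, let $D>0$, and consider $\|f\|_\infty=\operatorname{ess\,sup}_{x\in[-D,D]^{d_{\mathrm{in}}}}\|f(x)\|_\infty$ (Lebesgue measure). Let $\varepsilon\in(0,1/2)$ and $\theta\in\Theta_{L,\mathbf N}$, and let $k\ge0$ be the smallest integer such that $\|\theta\|_\infty\le\varepsilon^{-k}$ and $\max(W,L)\le\varepsilon^{-k}$. Let $m$ be an integer with $m\ge 2kL+k+1+\log_2(\lceil D\rceil)$ and $\eta:=2^{-m\lceil\log_2(\varepsilon^{-1})\rceil}$ (so $\eta\le\varepsilon^m$). Let $Q_\eta(\theta)$ be obtained by replacing each coordinate of $\theta$ by a closest point of $\eta\mathbb Z\cap[-\varepsilon^{-k},\varepsilon^{-k}]$. Then $Q_\eta(\theta)\in\Theta^{\max}_{L,\mathbf N}(\varepsilon^{-k})\cap(\eta\mathbb Z)^{d_{L,\mathbf N}}$ and $\|R_\theta-R_{Q_\eta(\theta)}\|_\infty\le\varepsilon$.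
   Context: ReLU $\rho(x)=\max(0,x)$ coordinatewise. Architecture $(L,\mathbf N)$, $\mathbf N=(N_0,\dots,N_L)$; parameters $\theta=(W_1,\dots,W_L,b_1,\dots,b_L)$, $W_\ell\in\mathbb R^{N_\ell\times N_{\ell-1}}$, $b_\ell\in\mathbb R^{N_\ell}$, forming $\Theta_{L,\mathbf N}\cong\mathbb R^{d_{L,\mathbf N}}$, $d_{L,\mathbf N}=\sum_\ell N_\ell(N_{\ell-1}+1)$; $\|\theta\|_\infty$ = max absolute value of coordinates. Realization: $R_\theta(x)=W_Ly_{L-1}(x)+b_L$, $y_0=x$, $y_\ell=\rho(W_\ell y_{\ell-1}+b_\ell)$, $1\le\ell\le L-1$. $\Theta^{\max}_{L,\mathbf N}(r)$ is the set of $\theta$ all of whose entries (of all $W_\ell,b_\ell$) have absolute value at most $r$. *)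

From HB Require Import structures.
From mathcomp Require Import all_boot all_order all_algebra.
From mathcomp Require Import reals exp.
Set Implicit Arguments. Unset Strict Implicit. Unset Printing Implicit Defensive.
Import Order.TTheory GRing.Theory Num.Theory.
Local Open Scope ring_scope.

Section ReLUNets.
Variable R : realType.

(* Architecture (L, N) with N_0, ..., N_L given by N (values of N beyond L unused).
   Layer index l : 'I_L stands for the paper's layer l+1:
   weight l = W_(l+1) in R^(N_(l+1) x N_l), bias l = b_(l+1) in R^(N_(l+1)). *)
Record params (L : nat) (N : nat -> nat) := Params {
  weight : forall l : 'I_L, 'M[R]_(N l.+1, N l);
  bias : forall l : 'I_L, 'cV[R]_(N l.+1) }.

Variables (L : nat) (N : nat -> nat).

Definition relu (t : R) : R := Num.max t 0.

Definition weightn (th : params L N) (l : nat) : 'M[R]_(N l.+1, N l) :=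
  (if (l < L)%N as b return (l < L)%N = b -> 'M[R]_(N l.+1, N l)
   then fun h => weight th (Ordinal h) else fun _ => 0) (erefl (l < L)%N).

Definition biasn (th : params L N) (l : nat) : 'cV[R]_(N l.+1) :=
  (if (l < L)%N as b return (l < L)%N = b -> 'cV[R]_(N l.+1)
   then fun h => bias th (Ordinal h) else fun _ => 0) (erefl (l < L)%N).

Fixpoint hidden (th : params L N) (x : 'cV[R]_(N 0%N)) (l : nat) : 'cV[R]_(N l) :=
  match l with
  | 0 => x
  | l'.+1 => map_mx relu (weightn th l' *m hidden th x l' + biasn th l')
  end.

(* R_theta(x) = W_L y_(L-1) + b_L  (output dimension N_((L-1)+1) = N_L for L >= 1) *)
Definition realization (th : params L N) (x : 'cV[R]_(N 0%N)) : 'cV[R]_(N L.-1.+1) :=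
  weightn th L.-1 *m hidden th x L.-1 + biasn th L.-1.

Definition param_norm (th : params L N) : R :=
  Num.max
    (\big[Num.max/0]_(l < L) \big[Num.max/0]_(i < N l.+1)
        \big[Num.max/0]_(j < N l) `|weight th l i j|)
    (\big[Num.max/0]_(l < L) \big[Num.max/0]_(i < N l.+1) `|bias th l i 0|).

Definition all_coords (P : R -> Prop) (th : params L N) : Prop :=
  (forall (l : 'I_L) i j, P (weight th l i j)) /\
  (forall (l : 'I_L) i, P (bias th l i 0)).

Definition in_Theta_max (r : R) (th : params L N) : Prop :=
  all_coords (fun t => `|t| <= r) th.

Definition on_grid (eta : R) (th : params L N) : Prop :=
  all_coords (fun t => exists z : int, t = z%:~R * eta) th.

Definition is_closest (G : R -> Prop) (v q : R) : Prop :=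
  G q /\ forall g, G g -> `|v - q| <= `|v - g|.

Definition is_quantization (G : R -> Prop) (th thq : params L N) : Prop :=
  (forall (l : 'I_L) i j, is_closest G (weight th l i j) (weight thq l i j)) /\
  (forall (l : 'I_L) i, is_closest G (bias th l i 0) (bias thq l i 0)).

Definition width : nat := \max_(l < L.+1) N l.

End ReLUNets.

Definition log2 {R : realType} (x : R) : R := ln x / ln 2.

From HB Require Import structures.
From mathcomp Require Import all_boot all_order all_algebra.
From mathcomp Require Import reals exp.
From mathcomp Require Import ring lra zify.
Import Order.TTheory GRing.Theory Num.Theory.
Local Open Scope ring_scope.

(* Each layer is an affine map followed by the 1-Lipschitz ReLU.  If all
   parameters of two networks have absolute value at most r >= max(W, L) and
   differ by at most eta, then an input bound B and an input discrepancy e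
   become r^2 B + r and r (eta B + r e) + eta after one layer.  With
   P_l = (C + 1) r^(2l), C = ceil D, the invariants |y_l| <= P_l - 1 and
   |y_l - y'_l| <= l eta P_l / r propagate, so the outputs differ by at most
   eta r^(2L+1) C.  Rounding to a closest point of eta Z /\ [-r, r] moves each
   coordinate by at most eta, and the choice of m gives eta r^(2L+1) C <= eps. *)

Definition bounded_close {R : numDomainType} (B e a b : R) : Prop :=
  `|a| <= B /\ `|b| <= B /\ `|a - b| <= e.

Lemma bounded_close_le {R : numDomainType} {B B' e e' a b : R} :
  B <= B' -> e <= e' -> bounded_close B e a b -> bounded_close B' e' a b.
Proof.
move=> BB' ee' [ha [hb hab]]; split; last split.
- exact: le_trans ha BB'.
- exact: le_trans hb BB'.
- exact: le_trans hab ee'.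
Qed.

Section Layer.
Context {R : realType}.

Lemma relu_norm_le (a : R) : `|relu a| <= `|a|.
Proof. by rewrite /relu; case: (lerP a 0) => h; rewrite ?normr0 ?normr_ge0. Qed.

Lemma relu_lipschitz (a b : R) : `|relu a - relu b| <= `|a - b|.
Proof.
rewrite /relu; case: (lerP a 0) => ha; case: (lerP b 0) => hb;
  rewrite ?subrr ?normr0 ?normr_ge0 //.
- by rewrite sub0r normrN (gtr0_norm hb) ler0_norm; lra.
- by rewrite subr0 (gtr0_norm ha) ger0_norm; lra.
Qed.

Lemma relu_bounded_close {B e a b : R} :
  bounded_close B e a b -> bounded_close B e (relu a) (relu b).
Proof.
move=> [ha [hb hab]]; split; last split.
- exact: le_trans (relu_norm_le a) ha.
- exact: le_trans (relu_norm_le b) hb.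
- exact: le_trans (relu_lipschitz a b) hab.
Qed.

Lemma norm_sum_ord_le n (F : 'I_n -> R) c :
  (forall j, `|F j| <= c) -> `|\sum_j F j| <= n%:R * c.
Proof.
move=> Fc; apply: le_trans (ler_norm_sum _ _ _) _.
apply: le_trans (ler_sum _ (fun j _ => Fc j)) _.
by rewrite sumr_const card_ord mulr_natl.
Qed.

Variables (p n : nat) (r eta B e : R).
Hypotheses (r_ge0 : 0 <= r) (n_le_r : n%:R <= r).
Hypotheses (eta_ge0 : 0 <= eta) (B_ge0 : 0 <= B) (e_ge0 : 0 <= e).

Lemma affine_norm_le (A : 'M[R]_(p, n)) (b : 'cV[R]_p) (y : 'cV[R]_n) :
  (forall i j, `|A i j| <= r) -> (forall i, `|b i 0| <= r) ->
  (forall j, `|y j 0| <= B) -> forall i, `|(A *m y + b) i 0| <= r * r * B + r.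
Proof.
move=> hA hb hy i; rewrite !mxE.
apply: le_trans (ler_normD _ _) _; apply: lerD; last exact: hb.
have sum_le : `|\sum_j A i j * y j 0| <= n%:R * (r * B).
  by apply: norm_sum_ord_le => j; rewrite normrM; apply: ler_pM.
apply: le_trans sum_le _; rewrite -mulrA; apply: ler_wpM2r => //.
exact: mulr_ge0.
Qed.

Lemma affine_bounded_close (A Aq : 'M[R]_(p, n)) (b bq : 'cV[R]_p) (y z : 'cV[R]_n) :
  (forall i j, bounded_close r eta (A i j) (Aq i j)) ->
  (forall i, bounded_close r eta (b i 0) (bq i 0)) ->
  (forall j, bounded_close B e (y j 0) (z j 0)) ->
  forall i, bounded_close (r * r * B + r) (r * (eta * B + r * e) + eta)
                          ((A *m y + b) i 0) ((Aq *m z + bq) i 0).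
Proof.
move=> hA hb hy i.
split; first by apply: affine_norm_le => [j k|j|j]; [case: (hA j k)|case: (hb j)|case: (hy j)].
split; first by apply: affine_norm_le => [j k|j|j];
  [case: (hA j k) => _ []|case: (hb j) => _ []|case: (hy j) => _ []].
rewrite !mxE.
have -> : \sum_j A i j * y j 0 + b i 0 - (\sum_j Aq i j * z j 0 + bq i 0)
    = \sum_j ((A i j - Aq i j) * y j 0 + Aq i j * (y j 0 - z j 0)) + (b i 0 - bq i 0).
  rewrite opprD addrACA -sumrB; congr (_ + _); apply: eq_bigr => j _; ring.
apply: le_trans (ler_normD _ _) _; apply: lerD; last by case: (hb i) => _ [].
have sum_le : `|\sum_j ((A i j - Aq i j) * y j 0 + Aq i j * (y j 0 - z j 0))|
    <= n%:R * (eta * B + r * e).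
  apply: norm_sum_ord_le => j; apply: le_trans (ler_normD _ _) _; rewrite !normrM.
  case: (hA i j) => _ [hAq hAd]; case: (hy j) => hyj [_ hyz].
  by apply: lerD; apply: ler_pM.
apply: le_trans sum_le _; apply: ler_wpM2r => //.
by apply: addr_ge0; apply: mulr_ge0.
Qed.

End Layer.

Lemma one_le_growth {R : realFieldType} (C r : R) n :
  1 <= C -> 1 <= r -> 1 <= (C + 1) * r ^+ n.
Proof.
move=> C_ge1 r_ge1; have r_pow_ge1 : 1 <= r ^+ n by apply: exprn_ege1.
by rewrite -[1]mul1r; apply: ler_pM; lra.
Qed.

(* [P] plays the role of [P_l]; after one layer it becomes [P r^2]. *)
Lemma layer_bounds_step {R : realFieldType} {r eta P : R} l :
  2 <= r -> 0 <= eta -> 1 <= P ->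
  r * r * (P - 1) + r <= P * r * r - 1 /\
  r * (eta * (P - 1) + r * (l%:R * eta * P / r)) + eta
    <= l.+1%:R * eta * (P * r * r) / r.
Proof.
move=> r_ge2 eta_ge0 P_ge1; split; first nra.
have -> : l.+1%:R * eta * (P * r * r) / r = r * eta * P + r * (l%:R * eta * P).
  by rewrite -natr1; field; lra.
have -> : r * (l%:R * eta * P / r) = l%:R * eta * P by field; lra.
nra.
Qed.

Definition preactivation {R : realType} {L : nat} {N : nat -> nat}
  (th : params R L N) (x : 'cV[R]_(N 0%N)) (l : nat) : 'cV[R]_(N l.+1) :=
  weightn th l *m hidden th x l + biasn th l.

Section Perturbation.
Context {R : realType} {L : nat} {N : nat -> nat} {th thq : params R L N}.
Context {r eta C : R} {x : 'cV[R]_(N 0%N)}.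
Hypotheses (r_ge2 : 2 <= r) (eta_ge0 : 0 <= eta) (C_ge1 : 1 <= C).
Hypothesis width_le : forall l, (l < L)%N -> (N l)%:R <= r.
Hypothesis weights_close :
  forall l i j, bounded_close r eta (weightn th l i j) (weightn thq l i j).
Hypothesis biases_close :
  forall l i, bounded_close r eta (biasn th l i 0) (biasn thq l i 0).
Hypothesis input_le : forall i, `|x i 0| <= C.

Local Notation P l := ((C + 1) * r ^+ (2 * l)%N).

Lemma preactivation_bounded_close l : (l < L)%N ->
  (forall j, bounded_close (P l - 1) (l%:R * eta * P l / r)
                           (hidden th x l j 0) (hidden thq x l j 0)) ->
  forall i, bounded_close (P l.+1 - 1) (l.+1%:R * eta * P l.+1 / r)
                          (preactivation th x l i 0) (preactivation thq x l i 0).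
Proof.
move=> lL hidden_close i.
(* [lra] ignores section hypotheses, so they are copied into the context. *)
have r2 := r_ge2; have eta0 := eta_ge0; have C1 := C_ge1.
have P_ge1 : 1 <= P l by apply: one_le_growth; lra.
have -> : P l.+1 = P l * r * r by rewrite mulnS exprD expr2; ring.
have [B_step e_step] := layer_bounds_step l r2 eta0 P_ge1.
apply: bounded_close_le B_step e_step _.
apply: affine_bounded_close => //.
- lra.
- exact: width_le.
- lra.
- by apply: divr_ge0; rewrite ?mulr_ge0 ?exprn_ge0 //; lra.
Qed.

Lemma hidden_bounded_close l : (l < L)%N ->
  forall i, bounded_close (P l - 1) (l%:R * eta * P l / r)
                          (hidden th x l i 0) (hidden thq x l i 0).
Proof.
elim: l => [|l IH] lL i.
  rewrite /bounded_close muln0 expr0 mulr1 addrK !mul0r subrr normr0.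
  by split; [|split]; rewrite ?input_le.
have := relu_bounded_close (preactivation_bounded_close l (ltnW lL) (IH (ltnW lL)) i).
by rewrite /preactivation /= !mxE.
Qed.

Lemma realization_perturbation : (0 < L)%N ->
  forall i, `|realization th x i 0 - realization thq x i 0| <= L%:R * eta * P L / r.
Proof.
move=> L_gt0 i.
have lL : (L.-1 < L)%N by rewrite prednK.
have [_ [_ close]] := preactivation_bounded_close _ lL (hidden_bounded_close _ lL) i.
by rewrite [in X in _ <= X](prednK L_gt0) in close.
Qed.

End Perturbation.

Section Params.
Context {R : realType} {L : nat} {N : nat -> nat}.

Lemma weight_le_param_norm (th : params R L N) l i j :
  `|weight th l i j| <= param_norm th.
Proof.
rewrite /param_norm le_max; apply/orP; left.
apply: le_trans (le_bigmax _ _ l); apply: le_trans (le_bigmax _ _ i).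
exact: (le_bigmax _ (fun j => `|weight th l i j|) j).
Qed.

Lemma bias_le_param_norm (th : params R L N) l i :
  `|bias th l i 0| <= param_norm th.
Proof.
rewrite /param_norm le_max; apply/orP; right.
apply: le_trans (le_bigmax _ _ l).
exact: (le_bigmax _ (fun i => `|bias th l i 0|) i).
Qed.

Lemma layer_dim_le_width {l : nat} : (l <= L)%N -> (N l <= width L N)%N.
Proof. by move=> lL; exact: (@leq_bigmax _ (fun i : 'I_L.+1 => N i) (Ordinal (lL : (l < L.+1)%N))). Qed.

(* [weightn] and [biasn] pad the layers beyond [L] with zeros. *)
Lemma weightn_rel (Rel : R -> R -> Prop) (th thq : params R L N) :
  Rel 0 0 -> (forall l i j, Rel (weight th l i j) (weight thq l i j)) ->
  forall l i j, Rel (weightn th l i j) (weightn thq l i j).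
Proof.
move=> Rel0 Rel_weight l i j; rewrite /weightn.
by move: (erefl (l < L)%N); case: {2 3 7}(l < L)%N => lL; rewrite ?mxE //; apply: Rel_weight.
Qed.

Lemma biasn_rel (Rel : R -> R -> Prop) (th thq : params R L N) :
  Rel 0 0 -> (forall l i, Rel (bias th l i 0) (bias thq l i 0)) ->
  forall l i, Rel (biasn th l i 0) (biasn thq l i 0).
Proof.
move=> Rel0 Rel_bias l i; rewrite /biasn.
by move: (erefl (l < L)%N); case: {2 3 7}(l < L)%N => lL; rewrite ?mxE //; apply: Rel_bias.
Qed.

End Params.

Definition bounded_grid {R : realType} (eta r q : R) : Prop :=
  (exists z : int, q = z%:~R * eta) /\ `|q| <= r.

Section Quantization.
Context {R : realType} {eta r : R}.
Hypothesis eta_gt0 : 0 < eta.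

Lemma grid_point_below {w : R} : 0 <= w ->
  exists z : int, 0 <= z%:~R * eta <= w /\ w - z%:~R * eta <= eta.
Proof.
move=> w_ge0; have eta0 := eta_gt0; exists (Num.floor (w / eta)).
have floor_ge0 : (0 : R) <= (Num.floor (w / eta))%:~R.
  by rewrite ler0z floor_ge0 divr_ge0 // ltW.
have /andP[floor_le lt_floor] := floor_itv (w / eta).
rewrite ler_pdivlMr // in floor_le.
rewrite intrD ltr_pdivrMr // in lt_floor.
split; last nra.
by rewrite floor_le mulr_ge0 // ltW.
Qed.

Lemma bounded_grid_near (v : R) : `|v| <= r ->
  exists2 g, bounded_grid eta r g & `|v - g| <= eta.
Proof.
move=> v_le; have [z [/andP[g_ge0 g_le] g_near]] := grid_point_below (normr_ge0 v).
have [v_ge0|v_lt0] := lerP 0 v.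
- rewrite (ger0_norm v_ge0) in v_le g_le g_near.
  exists (z%:~R * eta); last by rewrite ger0_norm; lra.
  by split; [exists z | rewrite ger0_norm //; lra].
- rewrite (ltr0_norm v_lt0) in v_le g_le g_near.
  exists ((- z)%:~R * eta); last by rewrite intrN mulNr opprK ler0_norm; lra.
  by split; [exists (- z) | rewrite intrN mulNr normrN ger0_norm //; lra].
Qed.

Lemma closest_bounded_grid_dist {v q : R} : `|v| <= r ->
  is_closest (bounded_grid eta r) v q -> `|v - q| <= eta.
Proof.
move=> /bounded_grid_near[g g_grid g_near] [_ closest].
exact: le_trans (closest g g_grid) g_near.
Qed.

End Quantization.

Lemma quantization_close {R : realType} {L : nat} {N : nat -> nat}
    {eta r : R} {th thq : params R L N} :
  0 < eta -> param_norm th <= r ->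
  is_quantization (bounded_grid eta r) th thq ->
  (forall l i j, bounded_close r eta (weightn th l i j) (weightn thq l i j)) /\
  (forall l i, bounded_close r eta (biasn th l i 0) (biasn thq l i 0)).
Proof.
move=> eta_gt0 norm_le [wq bq].
have r_ge0 : 0 <= r.
  by apply: le_trans norm_le; rewrite le_max bigmax_ge_id.
have close00 : bounded_close r eta 0 0.
  by rewrite /bounded_close subrr normr0 r_ge0 (ltW eta_gt0).
split; [apply: weightn_rel => // l i j | apply: biasn_rel => // l i].
- have w_le := le_trans (weight_le_param_norm th l i j) norm_le.
  have [[_ q_le] _] := wq l i j.
  by split; [|split]; last exact: (closest_bounded_grid_dist eta_gt0 w_le (wq l i j)).
- have b_le := le_trans (bias_le_param_norm th l i) norm_le.
  have [[_ q_le] _] := bq l i.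
  by split; [|split]; last exact: (closest_bounded_grid_dist eta_gt0 b_le (bq l i)).
Qed.

Lemma le_exp2_of_log2_le {R : realType} (y : R) n :
  0 < y -> log2 y <= n%:R -> y <= 2 ^+ n.
Proof.
move=> y_gt0 log_le.
have ln2_gt0 : 0 < ln (2 : R) by apply: ln_gt0; lra.
rewrite -ler_ln ?posrE ?exprn_gt0 // lnXn; last lra.
by rewrite /log2 ler_pdivrMr // mulr_natl in log_le.
Qed.

Lemma exp2_ceil_log2_le {R : realType} (eps : R) m : 0 < eps -> eps < 1 ->
  (2 : R) ^ (- (m%:Z * Num.ceil (log2 (eps^-1)))) <= eps ^+ m.
Proof.
move=> eps_gt0 eps_lt1.
have inv_gt1 : 1 < eps^-1 by rewrite invf_gt1.
have log_gt0 : 0 < log2 (eps^-1).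
  by apply: divr_gt0; apply: ln_gt0; lra.
have := ceil_ge (log2 (eps^-1)).
have : 0 <= Num.ceil (log2 (eps^-1)) by rewrite ceil_ge0; lra.
case: (Num.ceil _) => [n _ /le_exp2_of_log2_le inv_le| //].
have {}inv_le : eps^-1 <= 2 ^+ n by apply: inv_le; lra.
rewrite -PoszM -exprnN mulnC exprM -exprVn.
apply: lerXn2r; rewrite ?nnegrE ?invr_ge0 ?exprn_ge0 //; first exact: ltW.
by rewrite -[eps]invrK lef_pV2 ?posrE ?invr_gt0 ?exprn_gt0.
Qed.

Lemma pow_div_le_of_log2 {R : realType} {eps C : R} {n m : nat} :
  0 < eps -> eps <= 1 / 2 -> 1 <= C -> n.+1%:R + log2 C <= m%:R ->
  eps ^+ m / eps ^+ n * C <= eps.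
Proof.
move=> eps_gt0 eps_le C_ge1 m_ge.
have log_ge0 : 0 <= log2 C by apply: divr_ge0; apply: ln_ge0; lra.
have n_lt_m : (n < m)%N by rewrite -(ltr_nat R); lra.
set j := (m - n.+1)%N.
have C_le : C <= 2 ^+ j.
  apply: le_exp2_of_log2_le; first lra.
  by rewrite /j natrB // -natr1 in m_ge *; lra.
have -> : eps ^+ m / eps ^+ n = eps * eps ^+ j.
  rewrite -{1}(subnKC n_lt_m) exprD exprS -/j.
  by field; rewrite expf_neq0 // gt_eqF.
have two_eps_pow : (2 * eps) ^+ j <= 1 by apply: exprn_ile1; lra.
rewrite exprMn in two_eps_pow.
have eps_pow_ge0 : 0 <= eps ^+ j by rewrite exprn_ge0 // ltW.
have : eps ^+ j * C <= 1 by nra.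
nra.
Qed.

Lemma output_error_le {R : realFieldType} {r eta C : R} {L : nat} :
  2 <= r -> L%:R <= r -> 1 <= C -> 0 <= eta ->
  L%:R * eta * ((C + 1) * r ^+ (2 * L)) / r <= eta * r ^+ (2 * L).+1 * C.
Proof.
move=> r_ge2 L_le C_ge1 eta_ge0.
have rpow_ge0 : 0 <= r ^+ (2 * L) by rewrite exprn_ge0 //; lra.
set X := eta * r ^+ (2 * L).
have X_ge0 : 0 <= X by rewrite mulr_ge0.
have -> : L%:R * eta * ((C + 1) * r ^+ (2 * L)) / r = (L%:R / r) * (C + 1) * X.
  by rewrite /X; field; lra.
have -> : eta * r ^+ (2 * L).+1 * C = r * C * X by rewrite /X exprS; ring.
have L_div_le : L%:R / r <= 1 by rewrite ler_pdivrMr ?mul1r //; lra.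
have L_div_ge0 : 0 <= L%:R / r by rewrite divr_ge0 //; lra.
have : (L%:R / r) * (C + 1) <= r * C by nra.
nra.
Qed.

Theorem mainTheorem7 (R : realType) (L : nat) (N : nat -> nat) (D eps : R)
  (th : params R L N) (k m : nat) (thq : params R L N) :
  (2 <= L)%N -> 0 < D -> 0 < eps -> eps < 1 / 2 ->
  (* k is the smallest natural number with the two bounds *)
  (param_norm th <= eps ^- k /\ ((maxn (width L N) L)%:R : R) <= eps ^- k) ->
  (forall k' : nat, param_norm th <= eps ^- k' /\
     ((maxn (width L N) L)%:R : R) <= eps ^- k' -> (k <= k')%N) ->
  ((2 * k * L + k + 1)%N%:R + log2 ((Num.ceil D)%:~R : R) <= (m%:R : R)) ->
  let eta : R := 2 ^ (- (m%:Z * Num.ceil (log2 (eps^-1)))) in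
  let G : R -> Prop := fun q => (exists z : int, q = z%:~R * eta) /\ `|q| <= eps ^- k in
  is_quantization G th thq ->
  in_Theta_max (eps ^- k) thq /\ on_grid eta thq /\
  (forall x : 'cV[R]_(N 0%N), (forall i, `|x i 0| <= D) ->
     forall i, `|realization th x i 0 - realization thq x i 0| <= eps).
Proof.
move=> L_ge2 D_gt0 eps_gt0 eps_lt [norm_le size_le] _ m_ge eta G quant.
set r := eps ^- k in norm_le size_le G quant *.
set C : R := (Num.ceil D)%:~R in m_ge.
have D_le_C : D <= C by exact: ceil_ge.
have C_ge1 : 1 <= C by rewrite /C ler1z -gtz0_ge1 -(ltr0z R); exact: lt_le_trans D_gt0 D_le_C.
have L_le_r : L%:R <= r by apply: le_trans size_le; rewrite ler_nat leq_maxr.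
have r_ge2 : 2 <= r by apply: le_trans L_le_r; rewrite ler_nat.
have width_le : forall l, (l < L)%N -> (N l)%:R <= r.
  move=> l lL; apply: le_trans size_le; rewrite ler_nat.
  exact: leq_trans (layer_dim_le_width (ltnW lL)) (leq_maxl _ _).
have eta_gt0 : 0 < eta by apply: exprz_gt0.
have [weights_close biases_close] := quantization_close eta_gt0 norm_le quant.
have [wq bq] := quant.
split; first by split=> [l i j | l i]; [case: (wq l i j) => -[] | case: (bq l i) => -[]].
split; first by split=> [l i j | l i]; [case: (wq l i j) => -[] | case: (bq l i) => -[]].
move=> x x_le i.
have x_le_C : forall i, `|x i 0| <= C by move=> j; apply: le_trans (x_le j) D_le_C.
apply: le_trans (realization_perturbation r_ge2 (ltW eta_gt0) C_ge1 width_le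
  weights_close biases_close x_le_C (ltnW L_ge2) i) _.
apply: le_trans (output_error_le r_ge2 L_le_r C_ge1 (ltW eta_gt0)) _.
have r_pow : r ^+ (2 * L).+1 = (eps ^+ (k * (2 * L).+1))^-1 by rewrite exprVn exprM.
have m_ge_exponent : (k * (2 * L).+1).+1%:R + log2 C <= m%:R.
  by rewrite (_ : (k * (2 * L).+1).+1 = 2 * k * L + k + 1)%N //; lia.
apply: le_trans (pow_div_le_of_log2 eps_gt0 (ltW eps_lt) C_ge1 m_ge_exponent).
rewrite r_pow; apply: ler_wpM2r; first lra.
apply: ler_wpM2r; first by rewrite invr_ge0 exprn_ge0 // ltW.
by apply: exp2_ceil_log2_le; lra.
Qed.
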